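(* Let $\Omega\subset\mathbf{R}^2$ be a convex bounded domain whose boundary $\gamma$ is a smooth simple closed curve with curvature $k$ satisfying $0<\beta<\min_\gamma k$, and let $r=1/\beta$. Let $F$ be a real polynomial on $\mathbf{R}^2$ such that for every $s$ and every $\epsilon$ in a neighborhood of $0$, $$F\big(\gamma(s)+rR_{-\epsilon}J\dot\gamma(s)\big)=F\big(\gamma(s)-rR_{\epsilon}J\dot\gamma(s)\big).$$ Then $F$ is constant on $\gamma_{+r}\cup\gamma_{-r}$, i.e. there is a constant $c$ with $F|_{\gamma_{+r}}=F|_{\gamma_{-r}}=c$.
   Context: $\gamma(s)$ is the arc-length parametrization of $\gamma$ in counterclockwise direction, $J$ is counterclockwise rotation by $\pi/2$, $R_\epsilon$ is counterclockwise rotation by angle $\epsilon$. The parallel curves are $\gamma_{\pm r}(s)=\gamma(s)\pm rJ\dot\gamma(s)$. The displayed identity expresses that $F$ takes equal values at the center of a positive Larmor circle (radius $r$) hitting $\gamma$ at $\gamma(s)$ at angle $\epsilon$ and at the center of the reflected negative Larmor circle in the two-sided magnetic billiard (billiard in which the magnetic field changes sign after each reflection). *)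

From Stdlib Require Import Reals Lra.
From Coquelicot Require Import Coquelicot.
Open Scope R_scope.

Definition pt := (R * R)%type.
Definition padd (p q : pt) : pt := (fst p + fst q, snd p + snd q).
Definition pscale (a : R) (p : pt) : pt := (a * fst p, a * snd p).
Definition psub (p q : pt) : pt := padd p (pscale (-1) q).

Definition J (p : pt) : pt := (- snd p, fst p).
Definition Rot (e : R) (p : pt) : pt :=
  (cos e * fst p - sin e * snd p, sin e * fst p + cos e * snd p).

Definition poly2 (N : nat) (c : nat -> nat -> R) (p : pt) : R :=
  sum_f_R0 (fun i => sum_f_R0 (fun j => c i j * fst p ^ i * snd p ^ j) N) N.

Definition curve (g1 g2 : R -> R) (s : R) : pt := (g1 s, g2 s).
Definition tangent (g1 g2 : R -> R) (s : R) : pt := (Derive g1 s, Derive g2 s).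
(* signed curvature (w.r.t. the counterclockwise normal J \dot\gamma) *)
Definition curvature (g1 g2 : R -> R) (s : R) : R :=
  Derive g1 s * Derive_n g2 2 s - Derive g2 s * Derive_n g1 2 s.

Definition smooth_simple_closed_arclength (g1 g2 : R -> R) (L : R) : Prop :=
  0 < L /\
  (forall n s, ex_derive_n g1 n s) /\ (forall n s, ex_derive_n g2 n s) /\
  (forall s, g1 (s + L) = g1 s /\ g2 (s + L) = g2 s) /\
  (forall s t, 0 <= s < L -> 0 <= t < L -> curve g1 g2 s = curve g1 g2 t -> s = t) /\
  (forall s, (Derive g1 s) ^ 2 + (Derive g2 s) ^ 2 = 1).

Definition par_plus (g1 g2 : R -> R) (r s : R) : pt :=
  padd (curve g1 g2 s) (pscale r (J (tangent g1 g2 s))).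
Definition par_minus (g1 g2 : R -> R) (r s : R) : pt :=
  psub (curve g1 g2 s) (pscale r (J (tangent g1 g2 s))).

From Stdlib Require Import Reals Lra.
From Coquelicot Require Import Coquelicot.
Open Scope R_scope.

(* Write [T] for the unit tangent, [P = gamma + r J T], [M = gamma - r J T] and
   [dF_p v] for the derivative of [F] at [p] in direction [v].  At [e = 0] both
   sides of the hypothesis are [F P] and [F M], and both moving points have
   velocity [r T] in [e]; hence [F P = F M] and [dF_P T = dF_M T].  By the
   Frenet equation [T' = k J T] the parallel curves have velocities
   [P' = (1 - r k) T] and [M' = (1 + r k) T], so differentiating [F P = F M] in
   [s] gives [(1 - r k) dF_P T = (1 + r k) dF_P T].  As [r k <> 0], [dF_P T = 0]:
   [F] is constant along [P], hence along [M]. *)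

Definition is_derive_pt (p : R -> pt) (t : R) (v : pt) : Prop :=
  is_derive (fun x => fst (p x)) t (fst v) /\ is_derive (fun x => snd (p x)) t (snd v).

Lemma is_derive_pt_ext (p q : R -> pt) (t : R) (v w : pt) :
  (forall x, p x = q x) -> v = w -> is_derive_pt p t v -> is_derive_pt q t w.
Proof.
  intros Hpq <- [H1 H2]; split; [revert H1 | revert H2];
    apply is_derive_ext; intro x; now rewrite Hpq.
Qed.

Lemma is_derive_ext_eq (f g : R -> R) (x l l' : R) :
  (forall y, f y = g y) -> l = l' -> is_derive f x l -> is_derive g x l'.
Proof. intros Hfg <-; apply is_derive_ext, Hfg. Qed.

Lemma is_derive_locally_eq (f g : R -> R) (x l l' : R) :
  locally x (fun y => f y = g y) -> is_derive f x l -> is_derive g x l' -> l = l'.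
Proof.
  intros Hfg Hf Hg.
  apply (is_derive_ext_loc f g _ _ Hfg) in Hf.
  now rewrite <- (is_derive_unique _ _ _ Hf), <- (is_derive_unique _ _ _ Hg).
Qed.

Lemma is_derive_0_const (f : R -> R) :
  (forall t, is_derive f t 0) -> forall x y, f x = f y.
Proof.
  intros Hf x y.
  destruct (Rtotal_order x y) as [Hxy | [-> | Hxy]].
  - now apply eq_is_derive.
  - reflexivity.
  - symmetry; now apply eq_is_derive.
Qed.

Lemma locally_0_of_Rabs_lt (P : R -> Prop) :
  (exists delta, 0 < delta /\ forall e, Rabs e < delta -> P e) -> locally 0 P.
Proof.
  intros [delta [Hdelta HP]].
  exists (mkposreal delta Hdelta); intros e He; apply HP.
  change (Rabs (e + - 0) < delta) in He.
  now rewrite Ropp_0, Rplus_0_r in He.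
Qed.

Lemma Rot_0 (v : pt) : Rot 0 v = v.
Proof. destruct v; unfold Rot; simpl; rewrite cos_0, sin_0; f_equal; ring. Qed.

Lemma J_J (v : pt) : J (J v) = pscale (-1) v.
Proof. destruct v; unfold J, pscale; simpl; f_equal; ring. Qed.

Lemma is_derive_pt_rotated_offset (q v : pt) (a b : R) :
  is_derive_pt (fun e => padd q (pscale a (Rot (b * e) v))) 0 (pscale (a * b) (J v)).
Proof.
  split; unfold padd, pscale, Rot, J; simpl; auto_derive; auto;
    rewrite Rmult_0_r, cos_0, sin_0; ring.
Qed.

Section ParallelCurves.

Variables g1 g2 : R -> R.
Hypothesis ex_derive_g1 : forall s, ex_derive g1 s.
Hypothesis ex_derive_g2 : forall s, ex_derive g2 s.
Hypothesis ex_derive_Dg1 : forall s, ex_derive (Derive g1) s.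
Hypothesis ex_derive_Dg2 : forall s, ex_derive (Derive g2) s.
Hypothesis unit_speed : forall s, Derive g1 s ^ 2 + Derive g2 s ^ 2 = 1.

Lemma tangent_perp_acceleration (s : R) :
  Derive g1 s * Derive_n g1 2 s + Derive g2 s * Derive_n g2 2 s = 0.
Proof.
  pose proof (is_derive_plus _ _ _ _ _
    (is_derive_pow _ 2 _ _ (Derive_correct _ _ (ex_derive_Dg1 s)))
    (is_derive_pow _ 2 _ _ (Derive_correct _ _ (ex_derive_Dg2 s)))) as Hnorm.
  pose proof (is_derive_locally_eq _ _ _ _ _ (filter_forall _ unit_speed) Hnorm
    (is_derive_const 1 s)) as H.
  unfold plus, zero in H; simpl in H.
  change (Derive_n ?g 2 s) with (Derive (Derive g) s); lra.
Qed.

Lemma frenet (s : R) :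
  Derive_n g1 2 s = - curvature g1 g2 s * Derive g2 s /\
  Derive_n g2 2 s = curvature g1 g2 s * Derive g1 s.
Proof.
  pose proof (tangent_perp_acceleration s) as Hperp.
  pose proof (unit_speed s) as Hunit.
  unfold curvature.
  set (a := Derive g1 s) in *; set (b := Derive g2 s) in *.
  set (a2 := Derive_n g1 2 s) in *; set (b2 := Derive_n g2 2 s) in *.
  assert (E1 : a2 - - (a * b2 - b * a2) * b =
               a2 * (1 - (a ^ 2 + b ^ 2)) + a * (a * a2 + b * b2)) by ring.
  assert (E2 : b2 - (a * b2 - b * a2) * a =
               b2 * (1 - (a ^ 2 + b ^ 2)) + b * (a * a2 + b * b2)) by ring.
  rewrite Hunit, Hperp in E1, E2; split; lra.
Qed.

Lemma is_derive_pt_par_plus (r s : R) :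
  is_derive_pt (par_plus g1 g2 r) s (pscale (1 - r * curvature g1 g2 s) (tangent g1 g2 s)).
Proof.
  destruct (frenet s) as [F1 F2].
  split; unfold par_plus, padd, pscale, J, curve, tangent; simpl; auto_derive; auto.
  - change (Derive (fun x => Derive g2 x) s) with (Derive_n g2 2 s).
    change (Derive (fun x => g1 x) s) with (Derive g1 s); rewrite F2; ring.
  - change (Derive (fun x => Derive g1 x) s) with (Derive_n g1 2 s).
    change (Derive (fun x => g2 x) s) with (Derive g2 s); rewrite F1; ring.
Qed.

Lemma par_minus_par_plus (r s : R) : par_minus g1 g2 r s = par_plus g1 g2 (- r) s.
Proof. unfold par_minus, par_plus, psub, padd, pscale; simpl; f_equal; ring. Qed.

Variables (F : pt -> R) (dF : pt -> pt -> R).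
Hypothesis is_derive_F_comp :
  forall p t v, is_derive_pt p t v -> is_derive (fun x => F (p x)) t (dF (p t) v).
Hypothesis dF_scal : forall p a v, dF p (pscale a v) = a * dF p v.

Variable r : R.
Hypothesis r_neq0 : r <> 0.
Hypothesis curvature_neq0 : forall s, curvature g1 g2 s <> 0.
Hypothesis rolling_symmetry : forall s, locally 0 (fun e =>
  F (padd (curve g1 g2 s) (pscale r (Rot (- e) (J (tangent g1 g2 s))))) =
  F (psub (curve g1 g2 s) (pscale r (Rot e (J (tangent g1 g2 s)))))).

Lemma F_par_plus_eq_par_minus (s : R) :
  F (par_plus g1 g2 r s) = F (par_minus g1 g2 r s).
Proof.
  pose proof (locally_singleton _ _ (rolling_symmetry s)) as H; simpl in H.
  now rewrite Ropp_0, !Rot_0 in H.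
Qed.

Lemma dF_tangent_par_plus_eq_par_minus (s : R) :
  dF (par_plus g1 g2 r s) (tangent g1 g2 s) = dF (par_minus g1 g2 r s) (tangent g1 g2 s).
Proof.
  set (T := tangent g1 g2 s).
  assert (Hplus : is_derive_pt (fun e => padd (curve g1 g2 s) (pscale r (Rot (- e) (J T))))
                    0 (pscale r T)).
  { eapply is_derive_pt_ext;
      [| | exact (is_derive_pt_rotated_offset (curve g1 g2 s) (J T) r (-1))].
    - intro e; cbv beta; replace (-1 * e) with (- e) by ring; reflexivity.
    - rewrite J_J; unfold pscale; simpl; f_equal; ring. }
  assert (Hminus : is_derive_pt (fun e => psub (curve g1 g2 s) (pscale r (Rot e (J T))))
                     0 (pscale r T)).
  { eapply is_derive_pt_ext;
      [| | exact (is_derive_pt_rotated_offset (curve g1 g2 s) (J T) (- r) 1)].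
    - intro e; unfold psub, padd, pscale; rewrite Rmult_1_l; simpl; f_equal; ring.
    - rewrite J_J; unfold pscale; simpl; f_equal; ring. }
  pose proof (is_derive_locally_eq _ _ _ _ _ (rolling_symmetry s)
    (is_derive_F_comp _ _ _ Hplus) (is_derive_F_comp _ _ _ Hminus)) as H.
  rewrite !dF_scal, Ropp_0, !Rot_0 in H.
  now apply (Rmult_eq_reg_l r).
Qed.

Lemma dF_tangent_par_plus_0 (s : R) : dF (par_plus g1 g2 r s) (tangent g1 g2 s) = 0.
Proof.
  set (k := curvature g1 g2 s).
  pose proof (is_derive_F_comp _ _ _ (is_derive_pt_par_plus r s)) as Hplus.
  pose proof (is_derive_F_comp _ _ _ (is_derive_pt_par_plus (- r) s)) as Hminus.
  assert (Hsame : locally s (fun x => F (par_plus g1 g2 r x) = F (par_plus g1 g2 (- r) x))).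
  { apply filter_forall; intro x; rewrite <- par_minus_par_plus.
    apply F_par_plus_eq_par_minus. }
  pose proof (is_derive_locally_eq _ _ _ _ _ Hsame Hplus Hminus) as H.
  rewrite !dF_scal, <- par_minus_par_plus, <- dF_tangent_par_plus_eq_par_minus in H.
  fold k in H.
  apply (Rmult_eq_reg_l (r * k)).
  - rewrite Rmult_0_r; lra.
  - exact (Rmult_integral_contrapositive_currified _ _ r_neq0 (curvature_neq0 s)).
Qed.

Theorem F_const_on_parallel_curves :
  exists C, forall s, F (par_plus g1 g2 r s) = C /\ F (par_minus g1 g2 r s) = C.
Proof.
  assert (Hconst : forall t, is_derive (fun x => F (par_plus g1 g2 r x)) t 0).
  { intro t; pose proof (is_derive_F_comp _ _ _ (is_derive_pt_par_plus r t)) as H.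
    now rewrite dF_scal, dF_tangent_par_plus_0, Rmult_0_r in H. }
  exists (F (par_plus g1 g2 r 0)); intro s.
  rewrite <- F_par_plus_eq_par_minus.
  split; apply (is_derive_0_const _ Hconst).
Qed.

End ParallelCurves.

(* [pred i] keeps the exponent natural; at [i = 0] the factor [INR i] is [0]. *)
Definition poly2_dir (N : nat) (c : nat -> nat -> R) (p v : pt) : R :=
  sum_f_R0 (fun i => sum_f_R0 (fun j => c i j *
    (INR i * fst p ^ pred i * fst v * snd p ^ j +
     fst p ^ i * (INR j * snd p ^ pred j * snd v))) N) N.

Lemma is_derive_sum_f_R0 (f : nat -> R -> R) (df : nat -> R) (t : R) (n : nat) :
  (forall i, is_derive (f i) t (df i)) ->
  is_derive (fun x => sum_f_R0 (fun i => f i x) n) t (sum_f_R0 df n).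
Proof.
  intros Hf; induction n as [| n IH]; simpl.
  - exact (Hf 0%nat).
  - exact (is_derive_plus _ _ _ _ _ IH (Hf (S n))).
Qed.

Lemma is_derive_poly2 (N : nat) (c : nat -> nat -> R) (p : R -> pt) (t : R) (v : pt) :
  is_derive_pt p t v -> is_derive (fun x => poly2 N c (p x)) t (poly2_dir N c (p t) v).
Proof.
  intros [H1 H2]; unfold poly2, poly2_dir.
  apply (is_derive_sum_f_R0 (fun i x => sum_f_R0 (fun j => c i j * fst (p x) ^ i * snd (p x) ^ j) N));
    intro i.
  apply (is_derive_sum_f_R0 (fun j x => c i j * fst (p x) ^ i * snd (p x) ^ j)); intro j.
  pose proof (is_derive_scal _ _ (c i j) _
    (is_derive_mult _ _ _ _ _ (is_derive_pow _ i _ _ H1) (is_derive_pow _ j _ _ H2) Rmult_comm))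
    as H.
  unfold mult, plus in H; simpl in H.
  revert H; apply is_derive_ext_eq; [intro x |]; ring.
Qed.

Lemma poly2_dir_scal (N : nat) (c : nat -> nat -> R) (p : pt) (a : R) (v : pt) :
  poly2_dir N c p (pscale a v) = a * poly2_dir N c p v.
Proof.
  unfold poly2_dir; rewrite scal_sum; apply sum_eq; intros i _.
  rewrite (Rmult_comm _ a), scal_sum; apply sum_eq; intros j _.
  simpl; ring.
Qed.

Theorem proposition5p4 (g1 g2 : R -> R) (L beta : R) (N : nat) (c : nat -> nat -> R) :
  smooth_simple_closed_arclength g1 g2 L ->
  0 < beta ->
  (forall s, beta < curvature g1 g2 s) ->
  (forall s, exists delta, 0 < delta /\ forall e, Rabs e < delta ->
     poly2 N c (padd (curve g1 g2 s) (pscale (/ beta) (Rot (- e) (J (tangent g1 g2 s))))) =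
     poly2 N c (psub (curve g1 g2 s) (pscale (/ beta) (Rot e (J (tangent g1 g2 s)))))) ->
  exists C, forall s,
    poly2 N c (par_plus g1 g2 (/ beta) s) = C /\
    poly2 N c (par_minus g1 g2 (/ beta) s) = C.
Proof.
  intros [_ [Hg1 [Hg2 [_ [_ Hunit]]]]] Hbeta Hk Hsym.
  apply (F_const_on_parallel_curves g1 g2) with (dF := poly2_dir N c).
  - intro s; exact (Hg1 1%nat s).
  - intro s; exact (Hg2 1%nat s).
  - intro s; exact (Hg1 2%nat s).
  - intro s; exact (Hg2 2%nat s).
  - exact Hunit.
  - apply is_derive_poly2.
  - apply poly2_dir_scal.
  - apply Rinv_neq_0_compat; lra.
  - intro s; specialize (Hk s); lra.
  - intro s; exact (locally_0_of_Rabs_lt _ (Hsym s)).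
Qed.
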